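(* Let $A\ge0$ and let $c:(0,1]\times S^1\to\mathbb R^2$ be smooth with each $c(t,\cdot)$ an immersion, and let $\alpha(t,\theta)$ be a continuous lift of $\arg c_\theta(t,\theta)$. Assume there are constants $C_1,C_2,C_3,C_4$ such that for all $t\in(0,1]$ and $\theta\in S^1$: (1) $\ell(c(t,\cdot))\le C_1$; (2) $|c_t(t,\theta)|\le C_2$; (3) $\int_{S^1}|\alpha_\theta(t,\theta)|\,d\theta\le C_3$; (4) $|\kappa_{c(t)}(\theta)|\le C_4/t$. Then $$\int_0^1\Big(\int_{S^1}(1+A\kappa_{c(t)}^2)\langle c_t,n_{c(t)}\rangle^2|c_\theta|\,d\theta\Big)^{1/2}dt\le C_2\big(\sqrt{C_1}+2\sqrt{AC_3C_4}\big).$$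
   Context: $S^1=\mathbb R/2\pi\mathbb Z$, $\mathbb R^2\cong\mathbb C$. $\ell(c)=\int_{S^1}|c_\theta|d\theta$, $n_c=ic_\theta/|c_\theta|$, $\kappa_c=\det(c_\theta,c_{\theta\theta})/|c_\theta|^3$. *)

From Stdlib Require Import Reals List.
From Coquelicot Require Import Coquelicot.
Open Scope R_scope.

Definition d_t (f : R -> R -> R) : R -> R -> R :=
  fun t th => Derive (fun s => f s th) t.
Definition d_th (f : R -> R -> R) : R -> R -> R :=
  fun t th => Derive (fun s => f t s) th.

Fixpoint iter_partial (w : list bool) (f : R -> R -> R) : R -> R -> R :=
  match w with
  | nil => f
  | b :: w' => if b then d_t (iter_partial w' f) else d_th (iter_partial w' f)
  end.

Definition smooth_on (U : R -> R -> Prop) (f : R -> R -> R) : Prop :=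
  forall (w : list bool) (t th : R), U t th ->
    ex_derive (fun s => iter_partial w f s th) t /\
    ex_derive (fun s => iter_partial w f t s) th /\
    continuous (fun p : R * R => iter_partial w f (fst p) (snd p)) (t, th).

Definition speed (x y : R -> R -> R) (t th : R) : R :=
  sqrt (d_th x t th ^ 2 + d_th y t th ^ 2).

Definition curve_length (x y : R -> R -> R) (t : R) : R :=
  RInt (fun th => speed x y t th) 0 (2 * PI).

Definition curvature (x y : R -> R -> R) (t th : R) : R :=
  (d_th x t th * d_th (d_th y) t th - d_th y t th * d_th (d_th x) t th)
    / speed x y t th ^ 3.

(* <c_t, n_c> with n_c = i c_theta / |c_theta| = (-y_theta, x_theta)/|c_theta| *)
Definition normal_velocity (x y : R -> R -> R) (t th : R) : R :=
  (- d_t x t th * d_th y t th + d_t y t th * d_th x t th) / speed x y t th.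

Definition inner_integral (A : R) (x y : R -> R -> R) (t : R) : R :=
  RInt (fun th => (1 + A * curvature x y t th ^ 2)
                  * normal_velocity x y t th ^ 2 * speed x y t th) 0 (2 * PI).

From mathcomp Require Import all_boot all_algebra.
From mathcomp Require Import all_classical all_reals all_analysis.
From mathcomp Require Import Rstruct Rstruct_topology.

Definition lebesgue_int_0_1 (g : R -> R) : \bar R :=
  (\int[@lebesgue_measure R]_(t in `]0%R, 1%R]%classic) (g t)%:E)%E.

Definition lebesgue_int_0_1_le (g : R -> R) (b : R) : Prop :=
  (lebesgue_int_0_1 g <= b%:E)%E.

(* The inner integrand is at most |c_t|^2 |c_theta| (1 + A C4 |kappa| / t), and
   kappa |c_theta| is the derivative alpha_theta of the tangent angle.  Hence the
   inner integral is at most C2^2 (C1 + A C3 C4 / t), its square root is at most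
   C2 sqrt C1 + C2 sqrt (A C3 C4) / sqrt t, and t^(-1/2) integrates to 2 over
   (0, 1]. *)

From Stdlib Require Import Reals Lra List.
From Coquelicot Require Import Coquelicot.
Import ListNotations.
Open Scope R_scope.

Lemma Lagrange_identity_le (a b c d : R) :
  (a * d - b * c) ^ 2 <= (a ^ 2 + b ^ 2) * (c ^ 2 + d ^ 2).
Proof.
replace ((a ^ 2 + b ^ 2) * (c ^ 2 + d ^ 2))
  with ((a * d - b * c) ^ 2 + (a * c + b * d) ^ 2) by ring.
pose proof (pow2_ge_0 (a * c + b * d)); lra.
Qed.

Lemma ex_RInt_derivable (f : R -> R) (a b : R) :
  (forall z, ex_derive f z) -> ex_RInt f a b.
Proof.
intros df; apply (@ex_RInt_continuous R_CompleteNormedModule); intros z _.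
exact (ex_derive_continuous f z (df z)).
Qed.

Lemma weighted_sqr_le (A k n s B K : R) :
  0 <= A -> 0 < s -> n ^ 2 <= B -> Rabs k <= K ->
  (1 + A * k ^ 2) * n ^ 2 * s <= B * s + B * A * K * Rabs (k * s).
Proof.
intros A_ge0 s_gt0 n_le k_le.
assert (k_sqr : k ^ 2 <= K * Rabs k).
{ rewrite <- pow2_abs; pose proof (Rabs_pos k); nra. }
rewrite Rabs_mult, (Rabs_pos_eq s) by lra.
assert (n ^ 2 * (A * k ^ 2) <= B * (A * (K * Rabs k))).
{ apply Rmult_le_compat; nra. }
nra.
Qed.

Lemma angle_sub_atan (r0 r a0 a : R) : 0 < r0 -> 0 < r -> Rabs (a - a0) < PI / 2 ->
  a = a0 + atan ((r0 * cos a0 * (r * sin a) - r0 * sin a0 * (r * cos a))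
               / (r0 * cos a0 * (r * cos a) + r0 * sin a0 * (r * sin a))).
Proof.
intros r0_gt0 r_gt0 close.
assert (Hz : - (PI / 2) < a - a0 < PI / 2) by (apply Rabs_def2 in close; lra).
assert (cos_gt0 : 0 < cos (a - a0)) by (apply cos_gt_0; lra).
replace (r0 * cos a0 * (r * sin a) - r0 * sin a0 * (r * cos a))
  with (r0 * r * sin (a - a0)) by (rewrite sin_minus; ring).
replace (r0 * cos a0 * (r * cos a) + r0 * sin a0 * (r * sin a))
  with (r0 * r * cos (a - a0)) by (rewrite cos_minus; ring).
replace (r0 * r * sin (a - a0) / (r0 * r * cos (a - a0))) with (tan (a - a0))
  by (unfold tan; field; split; lra).
rewrite (atan_tan _ Hz); ring.
Qed.

Lemma polar_angle_derive (X Y r a : R -> R) (th0 : R) :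
  (forall th, 0 < r th) ->
  (forall th, X th = r th * cos (a th) /\ Y th = r th * sin (a th)) ->
  continuous a th0 -> ex_derive X th0 -> ex_derive Y th0 ->
  is_derive a th0
    ((X th0 * Derive Y th0 - Y th0 * Derive X th0) / (X th0 ^ 2 + Y th0 ^ 2)).
Proof.
intros r_gt0 polar a_cont dX dY.
destruct (polar th0) as [X0 Y0].
assert (near : locally th0 (fun th => Rabs (a th - a th0) < PI / 2)).
{ assert (pi2_gt0 : 0 < PI / 2) by (pose proof PI_RGT_0; lra).
  exact (a_cont _ (locally_ball (a th0) (mkposreal _ pi2_gt0))). }
(* Near th0 the angle moves by less than pi/2, so atan recovers it. *)
apply (is_derive_ext_loc (fun th => a th0 + atan
  ((X th0 * Y th - Y th0 * X th) / (X th0 * X th + Y th0 * Y th)))).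
{ eapply filter_imp; [intros th Hth | exact near]; simpl in Hth.
  destruct (polar th) as [-> ->]; rewrite X0, Y0.
  symmetry; apply angle_sub_atan; auto. }
assert (D_pos : 0 < X th0 * X th0 + Y th0 * Y th0).
{ rewrite X0, Y0; pose proof (sin2_cos2 (a th0)); pose proof (r_gt0 th0).
  unfold Rsqr in *; nra. }
auto_derive; [repeat split; auto; lra |].
change (fun u : R => Y u) with Y; change (fun u : R => X u) with X.
field; split; nra.
Qed.

Lemma RInt_lincomb (f g : R -> R) (a b p q : R) :
  ex_RInt f a b -> ex_RInt g a b ->
  RInt (fun x => p * f x + q * g x) a b = p * RInt f a b + q * RInt g a b.
Proof.
intros If Ig.
rewrite (RInt_plus (fun x => p * f x) (fun x => q * g x)).
- rewrite (RInt_scal f), (RInt_scal g); easy.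
- apply (ex_RInt_scal f); exact If.
- apply (ex_RInt_scal g); exact Ig.
Qed.

Lemma sqrt_le_square (u C : R) : 0 <= C -> sqrt u <= C -> u <= C ^ 2.
Proof.
intros C_ge0 su_le.
destruct (Rle_or_lt 0 u) as [u_ge0 | u_lt0]; [| nra].
rewrite <- (sqrt_sqrt u u_ge0); pose proof (sqrt_pos u); nra.
Qed.

Lemma sqrt_add_le (u v : R) : sqrt (u + v) <= sqrt u + sqrt v.
Proof.
pose proof (sqrt_pos u); pose proof (sqrt_pos v).
destruct (Rle_or_lt 0 u) as [u_ge0 | u_lt0]; destruct (Rle_or_lt 0 v) as [v_ge0 | v_lt0].
- rewrite <- (sqrt_pow2 (sqrt u + sqrt v)) by lra.
  apply sqrt_le_1_alt.
  pose proof (sqrt_sqrt u u_ge0); pose proof (sqrt_sqrt v v_ge0); nra.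
- rewrite (sqrt_neg_0 v) by lra; apply Rle_trans with (sqrt u); [apply sqrt_le_1_alt |]; lra.
- rewrite (sqrt_neg_0 u) by lra; apply Rle_trans with (sqrt v); [apply sqrt_le_1_alt |]; lra.
- rewrite (sqrt_neg_0 (u + v)) by lra; lra.
Qed.

Lemma sqrt_add_div_le (u v t : R) : 0 < t -> sqrt (u + v / t) <= sqrt u + sqrt v / sqrt t.
Proof.
intros t_gt0; rewrite <- sqrt_div_alt by exact t_gt0; apply sqrt_add_le.
Qed.

Lemma continuous_slice (D : R * R -> Prop) (f : R -> R -> R) (t th : R) :
  (forall s, D (t, s)) ->
  filterlim (fun p : R * R => f (fst p) (snd p)) (within D (locally (t, th)))
    (locally (f t th)) ->
  continuous (f t) th.
Proof.
intros D_slice f_cont.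
apply (filterlim_comp _ _ _ (fun s => (t, s)) (fun p : R * R => f (fst p) (snd p))
  _ (within D (locally (t, th)))); [| exact f_cont].
intros P [e Pe]; exists e; intros s Hs.
apply Pe; [split; [apply ball_center | exact Hs] | apply D_slice].
Qed.

Lemma smooth_on_ex_derive (U : R -> R -> Prop) (f : R -> R -> R) (w : list bool) (t th : R) :
  smooth_on U f -> U t th -> ex_derive (fun s => iter_partial w f t s) th.
Proof. intros f_smooth Utth; apply (f_smooth w t th Utth). Qed.

Section fixed_time.
Variables (x y : R -> R -> R) (t : R).
Hypothesis dx : forall th, ex_derive (fun s => d_th x t s) th.
Hypothesis dy : forall th, ex_derive (fun s => d_th y t s) th.
Hypothesis immersion : forall th, speed x y t th <> 0.

Lemma speed_gt0 th : 0 < speed x y t th.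
Proof.
pose proof (sqrt_pos (d_th x t th ^ 2 + d_th y t th ^ 2)).
pose proof (immersion th); unfold speed in *; lra.
Qed.

Lemma speed_sqr th : speed x y t th ^ 2 = d_th x t th ^ 2 + d_th y t th ^ 2.
Proof.
unfold speed; rewrite <- Rsqr_pow2; apply Rsqr_sqrt; nra.
Qed.

Lemma normal_velocity_sqr_le th :
  normal_velocity x y t th ^ 2 <= d_t x t th ^ 2 + d_t y t th ^ 2.
Proof.
pose proof (speed_gt0 th) as s_gt0; pose proof (speed_sqr th) as s_sqr.
unfold normal_velocity; set (s := speed x y t th) in *.
apply (Rmult_le_reg_r (s ^ 2)); [nra |].
replace (((- d_t x t th * d_th y t th + d_t y t th * d_th x t th) / s) ^ 2 * s ^ 2)
  with ((d_t y t th * d_th x t th - d_t x t th * d_th y t th) ^ 2) by (field; lra).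
rewrite s_sqr.
replace ((d_t x t th ^ 2 + d_t y t th ^ 2) * (d_th x t th ^ 2 + d_th y t th ^ 2))
  with ((d_t y t th ^ 2 + d_t x t th ^ 2) * (d_th y t th ^ 2 + d_th x t th ^ 2)) by ring.
apply Lagrange_identity_le.
Qed.

Variable alpha : R -> R -> R.
Hypothesis alpha_cont : forall th, continuous (alpha t) th.
Hypothesis alpha_lift : forall th,
  d_th x t th = speed x y t th * cos (alpha t th) /\
  d_th y t th = speed x y t th * sin (alpha t th).

Lemma d_th_lift th : d_th alpha t th = curvature x y t th * speed x y t th.
Proof.
pose proof (speed_gt0 th); pose proof (speed_sqr th).
apply is_derive_unique.
replace (curvature x y t th * speed x y t th) with
  ((d_th x t th * Derive (d_th y t) th - d_th y t th * Derive (d_th x t) th)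
   / (d_th x t th ^ 2 + d_th y t th ^ 2)).
- exact (polar_angle_derive _ _ _ _ th speed_gt0 alpha_lift (alpha_cont th) (dx th) (dy th)).
- change (Derive (d_th y t) th) with (d_th (d_th y) t th).
  change (Derive (d_th x t) th) with (d_th (d_th x) t th).
  unfold curvature; rewrite <- speed_sqr; field; lra.
Qed.

Hypothesis dxx : forall th, ex_derive (fun s => d_th (d_th x) t s) th.
Hypothesis dyy : forall th, ex_derive (fun s => d_th (d_th y) t s) th.
Hypothesis dtx : forall th, ex_derive (fun s => d_t x t s) th.
Hypothesis dty : forall th, ex_derive (fun s => d_t y t s) th.

Lemma ex_derive_speed th : ex_derive (fun s => speed x y t s) th.
Proof.
pose proof (speed_gt0 th); pose proof (speed_sqr th).
unfold speed in *; auto_derive; repeat split; auto; nra.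
Qed.

Lemma ex_derive_curvature th : ex_derive (fun s => curvature x y t s) th.
Proof.
pose proof (speed_gt0 th).
unfold curvature; auto_derive; repeat split; auto using ex_derive_speed.
apply Rgt_not_eq; repeat apply Rmult_lt_0_compat; lra.
Qed.

Lemma ex_derive_normal_velocity th : ex_derive (fun s => normal_velocity x y t s) th.
Proof.
pose proof (speed_gt0 th).
unfold normal_velocity; auto_derive; repeat split; auto using ex_derive_speed; lra.
Qed.

Lemma inner_integral_le (A B C1 C3 K : R) :
  0 <= A -> curve_length x y t <= C1 ->
  (forall th, d_t x t th ^ 2 + d_t y t th ^ 2 <= B) ->
  RInt (fun th => Rabs (d_th alpha t th)) 0 (2 * PI) <= C3 ->
  (forall th, Rabs (curvature x y t th) <= K) ->
  inner_integral A x y t <= B * C1 + B * A * K * C3.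
Proof.
intros A_ge0 length_le vel_le turn_le curv_le.
assert (B_ge0 : 0 <= B) by (pose proof (vel_le 0); nra).
assert (K_ge0 : 0 <= K) by (pose proof (curv_le 0); pose proof (Rabs_pos (curvature x y t 0)); lra).
assert (Ispeed : ex_RInt (speed x y t) 0 (2 * PI))
  by (apply ex_RInt_derivable, ex_derive_speed).
assert (Iturn : ex_RInt (fun th => Rabs (curvature x y t th * speed x y t th)) 0 (2 * PI)).
{ apply (ex_RInt_norm (fun th => curvature x y t th * speed x y t th)).
  apply ex_RInt_derivable; intro th.
  apply (ex_derive_mult (curvature x y t)); auto using ex_derive_curvature, ex_derive_speed. }
unfold inner_integral.
apply Rle_trans with (RInt (fun th => B * speed x y t th
  + B * A * K * Rabs (curvature x y t th * speed x y t th)) 0 (2 * PI)).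
- apply RInt_le.
  + pose proof PI_RGT_0; lra.
  + apply ex_RInt_derivable; intro th; auto_derive; repeat split;
      auto using ex_derive_speed, ex_derive_curvature, ex_derive_normal_velocity.
  + apply (ex_RInt_plus (fun th => B * speed x y t th)
      (fun th => B * A * K * Rabs (curvature x y t th * speed x y t th))).
    * apply (ex_RInt_scal (speed x y t)); exact Ispeed.
    * apply (ex_RInt_scal (fun th => Rabs (curvature x y t th * speed x y t th))).
      exact Iturn.
  + intros th _; apply weighted_sqr_le; auto using speed_gt0.
    apply (Rle_trans _ _ _ (normal_velocity_sqr_le th)); auto.
- rewrite RInt_lincomb by assumption.
  rewrite (RInt_ext (fun th => Rabs (curvature x y t th * speed x y t th))
    (fun th => Rabs (d_th alpha t th)))
    by (intros th _; rewrite d_th_lift; reflexivity).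
  apply Rplus_le_compat; apply Rmult_le_compat_l; auto.
  apply Rmult_le_pos; [apply Rmult_le_pos |]; auto.
Qed.

Lemma sqrt_inner_integral_le (A C1 C2 C3 C4 : R) :
  0 <= A -> 0 < t -> 0 <= C2 -> curve_length x y t <= C1 ->
  (forall th, sqrt (d_t x t th ^ 2 + d_t y t th ^ 2) <= C2) ->
  RInt (fun th => Rabs (d_th alpha t th)) 0 (2 * PI) <= C3 ->
  (forall th, Rabs (curvature x y t th) <= C4 / t) ->
  sqrt (inner_integral A x y t) <= C2 * sqrt C1 + C2 * sqrt (A * C3 * C4) / sqrt t.
Proof.
intros A_ge0 t_gt0 C2_ge0 length_le vel_le turn_le curv_le.
apply Rle_trans with (sqrt (C2 ^ 2 * (C1 + A * C3 * C4 / t))).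
{ apply sqrt_le_1_alt.
  replace (C2 ^ 2 * (C1 + A * C3 * C4 / t))
    with (C2 ^ 2 * C1 + C2 ^ 2 * A * (C4 / t) * C3) by (field; lra).
  apply inner_integral_le; auto.
  intros th; apply sqrt_le_square; auto. }
rewrite sqrt_mult_alt, sqrt_pow2 by nra.
replace (C2 * sqrt C1 + C2 * sqrt (A * C3 * C4) / sqrt t)
  with (C2 * (sqrt C1 + sqrt (A * C3 * C4) / sqrt t)) by (unfold Rdiv; ring).
apply Rmult_le_compat_l; [exact C2_ge0 | apply sqrt_add_div_le; exact t_gt0].
Qed.

End fixed_time.

From mathcomp Require Import all_boot all_order all_algebra.
From mathcomp Require Import all_classical all_reals all_analysis.
From mathcomp Require Import measurable_realfun.
Import Order.TTheory GRing.Theory Num.Theory numFieldNormedType.Exports.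

Section ge0_le_integral_nonmeasurable.
Local Open Scope ring_scope.
Local Open Scope classical_set_scope.
Context d (T : measurableType d) (R : realType).
Variable mu : {measure set T -> \bar R}.

(* No measurability is needed: the integral of a nonnegative function is a
   supremum over the simple functions below it. *)
Lemma ge0_le_integral_nonmeasurable (D : set T) (f g : T -> \bar R) :
  (forall x, D x -> (0 <= f x)%E) -> (forall x, D x -> (f x <= g x)%E) ->
  (\int[mu]_(x in D) f x <= \int[mu]_(x in D) g x)%E.
Proof.
move=> f0 fg.
have g0 x : D x -> (0 <= g x)%E by move=> Dx; exact: le_trans (f0 x Dx) (fg x Dx).
rewrite (@ge0_integralE _ _ _ mu D f f0) (@ge0_integralE _ _ _ mu D g g0).
apply: ereal_sup_le => _ [h hf <-]; exists h => //= z.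
apply: le_trans (hf z) _; rewrite /patch; case: ifP => // /set_mem Dz.
exact: fg.
Qed.

End ge0_le_integral_nonmeasurable.

Section improper_FTC.
Local Open Scope ring_scope.
Local Open Scope classical_set_scope.
Context (R : realType).
Notation mu := (@lebesgue_measure R).

Lemma bigcup_itv_cc_oc (a b : R) : a < b ->
  \bigcup_n `[a + (b - a) / n.+2%:R, b] = `]a, b].
Proof.
move=> ab; have ba0 : 0 < b - a by rewrite subr_gt0.
apply/seteqP; split=> x /=.
  case=> n _ /=; rewrite !in_itv /= => /andP[ux ->]; rewrite andbT.
  by apply: lt_le_trans ux; rewrite ltrDl divr_gt0.
rewrite in_itv /= => /andP[ax xb]; have xa0 : 0 < x - a by rewrite subr_gt0.
exists (Num.truncn ((b - a) / (x - a))) => //=; rewrite in_itv /= xb andbT.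
rewrite -lerBrDl ler_pdivrMr // mulrC -ler_pdivrMr //.
apply/ltW/(lt_le_trans (truncnS_gt _)).
by rewrite ler_nat.
Qed.

Lemma ge0_integral_itv_oc_le (f F : R -> R) (a b : R) : a < b ->
  (forall x, a < x <= b -> 0 <= f x) ->
  (forall x, a < x <= b -> {for x, continuous f}) ->
  (forall x, a < x <= b -> is_derive x 1 F (f x)) ->
  (forall x, a < x <= b -> F a <= F x) ->
  (\int[mu]_(x in `]a, b]) (f x)%:E <= (F b - F a)%:E)%E.
Proof.
move=> ab f0 cf dF Fa; have ba0 : 0 < b - a by rewrite subr_gt0.
pose u (n : nat) := a + (b - a) / n.+2%:R.
have au n : a < u n by rewrite ltrDl divr_gt0.
have ub n : u n < b.
  by rewrite -ltrBrDl ltr_pdivrMr // ltr_pMr // ltr1n.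
have nd : {homo (fun n => `[u n, b]) : n m / (n <= m)%N >-> (n <= m)%O}.
  move=> n m nm; apply/subsetPset/subset_itv; rewrite bnd_simp // lerD2l.
  by rewrite ler_pM2l // lef_pV2 ?posrE ?ltr0n // ler_nat.
have sub n x : u n <= x <= b -> a < x <= b.
  by move=> /andP[ux ->]; rewrite (lt_le_trans (au n) ux).
have mf n : measurable_fun `[u n, b] (EFin \o f).
  apply/measurable_EFinP; apply: subspace_continuous_measurable_fun => //.
  by apply: continuous_in_subspaceT => x /set_mem /= /[!in_itv] /= /(sub n) /cf.
have cvgI := @ge0_nondecreasing_set_cvg_integral _ (measurableTypeR R) R (fun n => `[u n, b])
  (EFin \o f) mu nd (fun => measurable_itv _) mf
  (fun n x ux => f0 x (sub n x ux)).
rewrite -(bigcup_itv_cc_oc _ _ ab) -(cvg_lim _ cvgI) //.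
apply: lime_le; first exact: cvgP cvgI.
apply: nearW => n /=.
have cF x : u n <= x <= b -> {for x, continuous F}.
  move=> /(sub n) /dF [dFx _]; exact/differentiable_continuous/derivable1_diffP.
rewrite (@continuous_FTC2 _ f F) ?lee_fin ?lerB ?Fa ?(au n) ?(ltW (ub n)) ?ub //.
- by apply: continuous_in_subspaceT => x /set_mem /= /[!in_itv] /= /(sub n) /cf.
- split.
  + move=> x /[!in_itv] /= /andP[ux xb].
    by have [] := dF x (sub n x _); rewrite ?ltW ?ux.
  + by apply: cvg_at_right_filter; apply: cF; rewrite lexx ltW.
  + by apply: cvg_at_left_filter; apply: cF; rewrite lexx ltW.
- move=> x /[!in_itv] /= /andP[ux xb].
  rewrite derive1E; apply: derive_val; apply: dF; apply: (sub n).
  by rewrite !ltW.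
Qed.

Lemma integral_itv_oc01_add_inv_sqrt_le (a b : R) : 0 <= a -> 0 <= b ->
  (\int[mu]_(t in `]0%R, 1%R]) (a + b / Num.sqrt t)%:E <= (a + 2 * b)%:E)%E.
Proof.
move=> a0 b0; pose F s := a * s + 2 * b * Num.sqrt s.
have dF (x : R) : 0 < x -> is_derive x 1 F (a + b / Num.sqrt x).
  move=> x0; have -> : a + b / Num.sqrt x = a *: 1 + (2 * b) *: (2 * Num.sqrt x)^-1.
    by rewrite /GRing.scale /= mulr1 invfM mulrACA mulfV ?pnatr_eq0 // mul1r.
  exact/is_deriveD/(is_deriveZ (2 * b) (is_derive1_sqrt x0)).
have := @ge0_integral_itv_oc_le (fun t => a + b / Num.sqrt t) F 0 1 ltr01.
rewrite /F !mulr0 sqrtr0 mulr0 addr0 subr0 sqrtr1 !mulr1; apply.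
- by move=> x _; rewrite addr_ge0 // divr_ge0 ?sqrtr_ge0.
- move=> x /andP[x0 _]; apply: cvgD; first exact: cvg_cst.
  apply: cvgM; first exact: cvg_cst.
  by apply: cvgV; [rewrite gt_eqF ?sqrtr_gt0 | exact: sqrt_continuous].
- by move=> x /andP[x0 _]; exact: dF.
- by move=> x /andP[x0 _]; rewrite addr_ge0 ?mulr_ge0 ?sqrtr_ge0 // ltW.
Qed.

End improper_FTC.

From mathcomp Require Import Rstruct Rstruct_topology.
(* Re-imported so that Stdlib's and Coquelicot's [sqrt], [cos], [continuous],
   [filterlim], ... shadow their MathComp homonyms again. *)
From Stdlib Require Import Reals.
From Coquelicot Require Import Coquelicot.
Open Scope R_scope.

Lemma lebesgue_int_0_1_le_add_inv_sqrt (g : R -> R) (a b : R) : 0 <= a -> 0 <= b ->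
  (forall t, 0 < t <= 1 -> 0 <= g t <= a + b / sqrt t) ->
  lebesgue_int_0_1_le g (a + 2 * b).
Proof.
move=> /RleP a0 /RleP b0 gb; rewrite /lebesgue_int_0_1_le /lebesgue_int_0_1.
apply: Order.POrderTheory.le_trans _ (@integral_itv_oc01_add_inv_sqrt_le R a b a0 b0).
apply: ge0_le_integral_nonmeasurable => t /=; rewrite in_itv /= => /andP[/RltP t0 /RleP t1];
  have [/RleP g0 /RleP g1] := gb t (conj t0 t1); rewrite lee_fin //.
by rewrite -RsqrtE -RdivE -RplusE.
Qed.

Theorem mainTheorem12
  (A : R) (x y alpha : R -> R -> R) (eps C1 C2 C3 C4 : R) :
  0 <= A ->
  0 < eps ->
  smooth_on (fun t _ => 0 < t < 1 + eps) x ->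
  smooth_on (fun t _ => 0 < t < 1 + eps) y ->
  (forall t th, 0 < t < 1 + eps ->
     x t (th + 2 * PI) = x t th /\ y t (th + 2 * PI) = y t th) ->
  (forall t th, 0 < t <= 1 -> speed x y t th <> 0) ->
  (forall t th, 0 < t <= 1 ->
     filterlim (fun p : R * R => alpha (fst p) (snd p))
       (within (fun p : R * R => 0 < fst p <= 1) (locally (t, th)))
       (locally (alpha t th))) ->
  (forall t th, 0 < t <= 1 ->
     d_th x t th = speed x y t th * cos (alpha t th) /\
     d_th y t th = speed x y t th * sin (alpha t th)) ->
  (forall t, 0 < t <= 1 -> curve_length x y t <= C1) ->
  (forall t th, 0 < t <= 1 -> sqrt (d_t x t th ^ 2 + d_t y t th ^ 2) <= C2) ->
  (forall t, 0 < t <= 1 -> RInt (fun th => Rabs (d_th alpha t th)) 0 (2 * PI) <= C3) ->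
  (forall t th, 0 < t <= 1 -> Rabs (curvature x y t th) <= C4 / t) ->
  lebesgue_int_0_1_le (fun t => sqrt (inner_integral A x y t))
    (C2 * (sqrt C1 + 2 * sqrt (A * C3 * C4))).
Proof.
intros A_ge0 eps_gt0 x_smooth y_smooth _ immersion alpha_cont alpha_lift
  length_le vel_le turn_le curv_le.
assert (C2_ge0 : 0 <= C2).
{ pose proof (vel_le 1 0 ltac:(lra)).
  pose proof (sqrt_pos (d_t x 1 0 ^ 2 + d_t y 1 0 ^ 2)); lra. }
replace (C2 * (sqrt C1 + 2 * sqrt (A * C3 * C4)))
  with (C2 * sqrt C1 + 2 * (C2 * sqrt (A * C3 * C4))) by ring.
apply lebesgue_int_0_1_le_add_inv_sqrt;
  [apply Rmult_le_pos; auto using sqrt_pos .. | intros t t_itv; split; [apply sqrt_pos |]].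
assert (t_nbhd : 0 < t < 1 + eps) by lra.
pose (dx (w : list bool) (th : R) := smooth_on_ex_derive _ _ w t th x_smooth t_nbhd).
pose (dy (w : list bool) (th : R) := smooth_on_ex_derive _ _ w t th y_smooth t_nbhd).
apply (sqrt_inner_integral_le x y t (dx [false]) (dy [false])
  (fun th => immersion t th t_itv) alpha
  (fun th => continuous_slice _ alpha t th (fun _ => t_itv) (alpha_cont t th t_itv))
  (fun th => alpha_lift t th t_itv) (dx [false; false]) (dy [false; false])
  (dx [true]) (dy [true])); auto; lra.
Qed.
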